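(* Let $D\ge1$, $V\in\mathbb{R}^{d_y\times d_x}$, and $\Sigma\in\mathbb{R}^{d_x\times d_x}$ positive definite. Let $V\Sigma^{1/2}=\hat L\hat S\hat R$ be a compact singular value decomposition with $\hat S\in\mathbb{R}^{r\times r}$ diagonal positive, $r=\mathrm{rank}(V\Sigma^{1/2})$. Consider matrices $W_k\in\mathbb{R}^{d_k\times d_{k-1}}$, $k=1,\dots,D$, with $d_0=d_x$, $d_D=d_y$ and $d_k\ge r$ for all $k$, and define, with $A_k:=W_D\cdots W_{k+1}$ ($A_D=I_{d_y}$) and $B_k:=W_{k-1}\cdots W_1$ ($B_1=I_{d_x}$), $$T(W_1,\dots,W_D)=\sum_{k=1}^D\mathrm{Tr}[A_k^TA_k]\,\mathrm{Tr}[B_k\Sigma B_k^T]$$ (equivalently $d_y\mathrm{Tr}[W_{D-1}\cdots W_1\Sigma W_1^T\cdots W_{D-1}^T]+\mathrm{Tr}[W_D^TW_D]\mathrm{Tr}[W_{D-2}\cdots W_1\Sigma W_1^T\cdots W_{D-2}^T]+\dots+\mathrm{Tr}[W_2^T\cdots W_D^TW_D\cdots W_2]\mathrm{Tr}[\Sigma]$). Then, under the constraint $W_D\cdots W_1=V$, $$\min T(W_1,\dots,W_D)=D(\mathrm{Tr}\hat S)^{2(D-1)/D}(d_y\mathrm{Tr}\Sigma)^{1/D},$$ and the minimum is achieved by $$W_D=(\mathrm{Tr}\hat S)^{-\frac{D-2}{2D}}d_y^{\frac{D-1}{2D}}(\mathrm{Tr}\Sigma)^{-\frac1{2D}}\hat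 L\hat S^{1/2}U_{D-1}^T,\quad W_k=(\mathrm{Tr}\hat S)^{\frac1D}(d_y\mathrm{Tr}\Sigma)^{-\frac1{2D}}U_kU_{k-1}^T\ (2\le k\le D-1),$$ $$W_1\Sigma^{1/2}=(\mathrm{Tr}\hat S)^{-\frac{D-2}{2D}}d_y^{-\frac1{2D}}(\mathrm{Tr}\Sigma)^{\frac{D-1}{2D}}U_1\hat S^{1/2}\hat R,$$ for arbitrary $U_i\in\mathbb{R}^{d_i\times r}$ with $U_i^TU_i=I_r$, $i=1,\dots,D-1$.
   Context: $\mathrm{Tr}\hat S$ is the nuclear norm of $V\Sigma^{1/2}$. *)

From HB Require Import structures.
From mathcomp Require Import all_boot all_order all_algebra.
From mathcomp Require Import reals exp.
Set Implicit Arguments. Unset Strict Implicit. Unset Printing Implicit Defensive.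
Import Order.TTheory GRing.Theory Num.Theory.
Local Open Scope ring_scope.

Definition posdef (R : realType) (n : nat) (A : 'M[R]_n) : Prop :=
  A^T = A /\ forall x : 'cV[R]_n, x != 0 -> 0 < (x^T *m A *m x) 0 0.

(* Layer widths d : nat -> nat (d 0 = d_x, d D = d_y); layer k >= 1 is
   W k : 'M_(d k, d (k-1)), i.e. W_k of the paper. Values for k = 0 or k > D
   are irrelevant. *)

(* Bprod d W n = W_n ... W_1  (Bprod d W 0 = identity), so B_k = Bprod (k-1). *)
Fixpoint Bprod (R : realType) (d : nat -> nat)
    (W : forall k : nat, 'M[R]_(d k, d k.-1)) (n : nat) : 'M[R]_(d n, d 0) :=
  match n with
  | 0 => 1%:M
  | n'.+1 => W n'.+1 *m Bprod W n'
  end.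

Fixpoint Tprod (R : realType) (d : nat -> nat)
    (W : forall k : nat, 'M[R]_(d k, d k.-1)) (k n : nat) : 'M[R]_(d (n + k), d k) :=
  match n with
  | 0 => 1%:M
  | n'.+1 => W (n' + k).+1 *m Tprod W k n'
  end.

Definition Aprod (R : realType) (d : nat -> nat)
    (W : forall k : nat, 'M[R]_(d k, d k.-1)) (D k : nat) (hk : (k <= D)%N)
    : 'M[R]_(d D, d k) :=
  castmx (congr1 d (subnK hk), erefl) (Tprod W k (D - k)).

(* T(W_1,...,W_D) = sum_{k=1}^D Tr[A_k^T A_k] Tr[B_k Sigma B_k^T];
   the index i : 'I_D corresponds to k = i+1. *)
Definition Tobj (R : realType) (d : nat -> nat) (D : nat) (Sigma : 'M[R]_(d 0))
    (W : forall k : nat, 'M[R]_(d k, d k.-1)) : R :=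
  \sum_(i < D)
     \tr ((Aprod W (ltn_ord i))^T *m Aprod W (ltn_ord i)) *
     \tr (Bprod W i *m Sigma *m (Bprod W i)^T).

Definition diag_sqrt (R : realType) (r : nat) (s : 'rV[R]_r) : 'M[R]_r :=
  diag_mx (\row_j Num.sqrt (s 0 j)).

From HB Require Import structures.
From mathcomp Require Import all_boot all_order all_algebra.
From mathcomp Require Import reals exp.
From mathcomp Require Import ring lra zify.
Set Implicit Arguments. Unset Strict Implicit. Unset Printing Implicit Defensive.
Import Order.TTheory GRing.Theory Num.Theory.
Local Open Scope ring_scope.

(* Since A_k B_(k+1) = W_D ... W_1 = V for k < D, the bound
   |V Sigma^(1/2)|_* <= |A_k|_F |B_(k+1) Sigma^(1/2)|_F on the nuclear norm gives
   Tr[A_k^T A_k] Tr[B_(k+1) Sigma B_(k+1)^T] >= (Tr S)^2.  Pairing the factors of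
   the D terms of T in this shifted way, their product is at least
   d_y Tr[Sigma] (Tr S)^(2(D-1)), and AM-GM turns this into the lower bound on the
   sum.  For the balanced layers, every A_k and B_k Sigma^(1/2) is a multiple of
   an isometry times diag(s)^(1/2) times a co-isometry, and the scales are chosen
   so that all D terms are equal, which is the equality case of AM-GM. *)
Section FrobeniusInequalities.
Variable R : realFieldType.

Lemma mxtrace_gram_ge0 m n (A : 'M[R]_(m, n)) : 0 <= \tr (A^T *m A).
Proof.
apply: sumr_ge0 => j _; rewrite mxE; apply: sumr_ge0 => i _.
by rewrite mxE -expr2 sqr_ge0.
Qed.

Lemma mxtrace_gramT_ge0 m n (A : 'M[R]_(m, n)) : 0 <= \tr (A *m A^T).
Proof. by rewrite mxtrace_mulC mxtrace_gram_ge0. Qed.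

Lemma mxtrace_gramZ m n (a : R) (A : 'M[R]_(m, n)) :
  \tr ((a *: A)^T *m (a *: A)) = a ^+ 2 * \tr (A^T *m A).
Proof. by rewrite [(a *: A)^T]linearZ /= -scalemxAl -scalemxAr scalerA mxtraceZ expr2. Qed.

Lemma mxtrace_gramTZ m n (a : R) (A : 'M[R]_(m, n)) :
  \tr ((a *: A) *m (a *: A)^T) = a ^+ 2 * \tr (A *m A^T).
Proof. by rewrite [(a *: A)^T]linearZ /= -scalemxAl -scalemxAr scalerA mxtraceZ expr2. Qed.

(* [M^T *m M] is an orthogonal projection, so [Z *m Z^T] splits as the sum of
   its parts on the range of the projection and on the complement. *)
Lemma mxtrace_gram_coisometry_le p q r (Z : 'M[R]_(p, q)) (M : 'M[R]_(r, q)) :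
  M *m M^T = 1%:M -> \tr ((Z *m M^T)^T *m (Z *m M^T)) <= \tr (Z *m Z^T).
Proof.
move=> M_coiso; set P := M^T *m M; set N := 1%:M - P.
have N_idem : N *m N^T = N.
  rewrite /N linearB /= trmx1 trmx_mul trmxK mulmxBl mul1mx mulmxBr mulmx1.
  by rewrite /P mulmxA -(mulmxA _ M) M_coiso mulmx1 subrr subr0.
have -> : \tr ((Z *m M^T)^T *m (Z *m M^T)) = \tr (Z *m P *m Z^T).
  by rewrite mxtrace_mulC trmx_mul trmxK !mulmxA.
have -> : Z *m Z^T = Z *m P *m Z^T + (Z *m N) *m (Z *m N)^T.
  rewrite trmx_mul (mulmxA (Z *m N)) -(mulmxA Z N) N_idem /N mulmxBr mulmx1 mulmxBl.
  by rewrite addrC subrK.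
by rewrite mxtraceD lerDl mxtrace_gramT_ge0.
Qed.

Lemma mxtrace_cauchy_schwarz m n (P Q : 'M[R]_(m, n)) :
  \tr (P^T *m Q) ^+ 2 <= \tr (P^T *m P) * \tr (Q^T *m Q).
Proof.
set pp := \tr (P^T *m P); set qq := \tr (Q^T *m Q); set pq := \tr (P^T *m Q).
have quad_ge0 a b : 0 <= a ^+ 2 * pp + 2 * a * b * pq + b ^+ 2 * qq.
  have := mxtrace_gram_ge0 (a *: P + b *: Q).
  rewrite [(_ + _)^T]linearD /= ![(_ *: _)^T]linearZ /= mulmxDl !mulmxDr.
  rewrite -!scalemxAl -!scalemxAr !mxtraceD !mxtraceZ -[\tr (Q^T *m P)]mxtrace_tr trmx_mul trmxK.
  by rewrite -/pp -/qq -/pq; congr (0 <= _); ring.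
have pp_ge0 : 0 <= pp := mxtrace_gram_ge0 P.
have qq_ge0 : 0 <= qq := mxtrace_gram_ge0 Q.
have [qq0|qq_gt0] := eqVneq qq 0.
  by have := quad_ge0 pq (- (pp + 1)); rewrite qq0; nra.
have {}qq_gt0 : 0 < qq by rewrite lt_def qq_gt0.
by have := quad_ge0 qq (- pq); nra.
Qed.

(* With [X *m Y = L diag(s) Rh] a (compact) SVD, [\sum_j s_j] is the nuclear
   norm of [X *m Y]; this is the bound [|X Y|_* <= |X|_F |Y|_F]. *)
Lemma nuclear_sqr_le p m n r (X : 'M[R]_(p, m)) (Y : 'M[R]_(m, n))
    (L : 'M[R]_(p, r)) (s : 'rV[R]_r) (Rh : 'M[R]_(r, n)) :
  L^T *m L = 1%:M -> Rh *m Rh^T = 1%:M -> X *m Y = L *m diag_mx s *m Rh ->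
  (\sum_j s 0 j) ^+ 2 <= \tr (X^T *m X) * \tr (Y *m Y^T).
Proof.
move=> L_iso Rh_coiso XY_svd.
have -> : \sum_j s 0 j = \tr ((X^T *m L)^T *m (Y *m Rh^T)).
  rewrite trmx_mul trmxK -mxtrace_diag !mulmxA -(mulmxA _ X) XY_svd !mulmxA L_iso.
  by rewrite mul1mx -mulmxA Rh_coiso mulmx1.
apply: (le_trans (mxtrace_cauchy_schwarz _ _)).
apply: ler_pM; rewrite ?mxtrace_gram_ge0 //.
  have := mxtrace_gram_coisometry_le (X^T) (M := L^T).
  by rewrite !trmxK => /(_ L_iso).
exact: mxtrace_gram_coisometry_le.
Qed.

End FrobeniusInequalities.

Lemma castmx_mull (R : pzSemiRingType) m m' n p (e : m = m')
    (A : 'M[R]_(m, n)) (B : 'M[R]_(n, p)) :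
  castmx (e, erefl n) A *m B = castmx (e, erefl p) (A *m B).
Proof. by case: m' / e; rewrite !castmx_id. Qed.

Lemma mxtrace_gram_castmx (R : pzSemiRingType) m m' n (e : m = m') (A : 'M[R]_(m, n)) :
  \tr ((castmx (e, erefl n) A)^T *m castmx (e, erefl n) A) = \tr (A^T *m A).
Proof. by case: m' / e; rewrite castmx_id. Qed.

Section Layers.
Variables (R : realType) (d : nat -> nat) (W : forall k : nat, 'M[R]_(d k, d k.-1)).

Lemma mulmx_Tprod_Bprod k n : Tprod W k n *m Bprod W k = Bprod W (n + k).
Proof. by elim: n => [|n IHn] /=; rewrite ?mul1mx // -mulmxA IHn. Qed.

Lemma castmx_Bprod n m (e : n = m) :
  castmx (congr1 d e, erefl (d 0)) (Bprod W n) = Bprod W m.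
Proof. by case: m / e; rewrite castmx_id. Qed.

Lemma mulmx_Aprod_Bprod D k (hk : (k <= D)%N) : Aprod W hk *m Bprod W k = Bprod W D.
Proof. by rewrite castmx_mull mulmx_Tprod_Bprod castmx_Bprod. Qed.

Lemma AprodE D k (hk : (k <= D)%N) m (e : (m + k)%N = D) :
  Aprod W hk = castmx (congr1 d e, erefl (d k)) (Tprod W k m).
Proof.
rewrite /Aprod; have em : m = (D - k)%N by rewrite -e addnK.
by move: (subnK hk); rewrite -em => e'; rewrite (eq_irrelevance e' e).
Qed.

End Layers.

Section PositiveDefinite.
Variables (R : realType) (n : nat).
Implicit Types A Sigma Sh : 'M[R]_n.

Lemma posdef_unitmx A : posdef A -> A \in unitmx.
Proof.
case=> _ A_pos; rewrite unitmxE unitfE; apply/negP => /det0P [v v_neq0 vA].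
by have := A_pos v^T; rewrite trmx_eq0 trmxK vA mul0mx mxE ltxx => /(_ v_neq0).
Qed.

Lemma posdef_diag_gt0 A i : posdef A -> 0 < A i i.
Proof.
case=> _ A_pos; have := A_pos (delta_mx i 0).
rewrite trmx_delta -rowE -colE !mxE; apply.
by apply/eqP => /matrixP /(_ i 0); rewrite !mxE !eqxx => /eqP; rewrite oner_eq0.
Qed.

Lemma posdef_mxtrace_gt0 A : (0 < n)%N -> posdef A -> 0 < \tr A.
Proof.
move=> n_gt0 A_pd; rewrite /mxtrace (bigD1 (Ordinal n_gt0)) //=.
rewrite ltr_pwDl ?posdef_diag_gt0 //.
by apply: sumr_ge0 => i _; rewrite ltW ?posdef_diag_gt0.
Qed.

Lemma mxtrace_conj_sqrt m Sigma Sh (B : 'M[R]_(m, n)) :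
  Sh^T = Sh -> Sh *m Sh = Sigma ->
  \tr (B *m Sigma *m B^T) = \tr ((B *m Sh) *m (B *m Sh)^T).
Proof. by move=> Sh_sym <-; rewrite trmx_mul Sh_sym !mulmxA. Qed.

Lemma mxtrace_sqr_ge0 Sh : Sh^T = Sh -> 0 <= \tr (Sh *m Sh).
Proof. by move=> Sh_sym; rewrite -{1}Sh_sym mxtrace_gram_ge0. Qed.

End PositiveDefinite.

Definition min_value (R : realType) (D : nat) (a y t : R) : R :=
  D%:R * powR a (2 * (D%:R - 1) / D%:R) * powR (y * t) D%:R^-1.

Section MinValue.
Variables (R : realType) (n : nat).
Local Notation N := (n.+1%:R : R).

Lemma min_valueE (a y t : R) : 0 <= a -> 0 <= y * t ->
  min_value n.+1 a y t = N * powR (y * t * a ^+ (2 * n)) N^-1.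
Proof.
move=> a_ge0 yt_ge0.
rewrite /min_value [in RHS]powRM ?exprn_ge0 // -[in RHS]powR_mulrn // -powRrM.
have -> : 2 * (N - 1) / N = (2 * n)%:R * N^-1.
  by rewrite -[n.+1]addn1 natrD addrK natrM.
by ring.
Qed.

Lemma mulr_powR_inv_le (x T : R) : 0 <= x -> 0 <= T -> x <= (T / N) ^+ n.+1 ->
  N * powR x N^-1 <= T.
Proof.
move=> x_ge0 T_ge0 x_le; have N_gt0 : 0 < N by rewrite ltr0n.
have TN_ge0 : 0 <= T / N by rewrite divr_ge0 // ltW.
rewrite mulrC -ler_pdivlMr //.
have -> : T / N = powR ((T / N) ^+ n.+1) N^-1.
  by rewrite -powR_mulrn // -powRrM mulfV ?gt_eqF // powRr1.
by apply: (@ge0_ler_powR _ N^-1); rewrite ?nnegrE ?invr_ge0 ?exprn_ge0 // ltW.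
Qed.

End MinValue.

Lemma min_value_single_layer (R : realType) (a y t : R) :
  0 <= y * t -> min_value 1 a y t = y * t.
Proof.
by move=> yt_ge0; rewrite /min_value subrr mulr0 mul0r powRr0 invr1 powRr1 // !mul1r.
Qed.

Lemma prodr_pair_shift (R : comPzRingType) n (f g : 'I_n.+1 -> R) :
  \prod_(i < n.+1) (f i * g i)
  = f ord_max * g ord0 * \prod_(i < n) (f (widen_ord (leqnSn n) i) * g (lift ord0 i)).
Proof. by rewrite !big_split /= big_ord_recr big_ord_recl /=; ring. Qed.

Section Terms.
Variables (R : realType) (d : nat -> nat) (D : nat) (Sigma : 'M[R]_(d 0)).
Variable W : forall k : nat, 'M[R]_(d k, d k.-1).

Definition Tobj_term (i : 'I_D) : R :=
  \tr ((Aprod W (ltn_ord i))^T *m Aprod W (ltn_ord i)) *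
  \tr (Bprod W i *m Sigma *m (Bprod W i)^T).

Lemma TobjE : Tobj D Sigma W = \sum_i Tobj_term i.
Proof. by []. Qed.

Lemma mxtrace_gram_Aprod_top (hD : (D <= D)%N) :
  \tr ((Aprod W hD)^T *m Aprod W hD) = (d D)%:R.
Proof.
by rewrite (AprodE W hD (erefl (0 + D)%N)) mxtrace_gram_castmx trmx1 mul1mx mxtrace1.
Qed.

End Terms.

Lemma Tobj_single_layer (R : realType) (d : nat -> nat) (Sigma : 'M[R]_(d 0))
    (W : forall k : nat, 'M[R]_(d k, d k.-1)) :
  Tobj 1 Sigma W = (d 1)%:R * \tr Sigma.
Proof.
by rewrite TobjE big_ord1 /Tobj_term mxtrace_gram_Aprod_top /= mul1mx trmx1 mulmx1.
Qed.

Section LowerBound.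
Variables (R : realType) (d : nat -> nat) (n : nat) (Sigma : 'M[R]_(d 0)).
Variable W : forall k : nat, 'M[R]_(d k, d k.-1).
Local Notation D := n.+1.
Variables (Sh : 'M[R]_(d 0)) (r : nat) (L : 'M[R]_(d D, r)) (s : 'rV[R]_r).
Variable Rh : 'M[R]_(r, d 0).
Hypotheses (Sh_sym : Sh^T = Sh) (Sh_sqr : Sh *m Sh = Sigma).
Hypotheses (L_iso : L^T *m L = 1%:M) (Rh_coiso : Rh *m Rh^T = 1%:M).
Hypothesis s_ge0 : forall j, 0 <= s 0 j.
Hypothesis W_svd : Bprod W D *m Sh = L *m diag_mx s *m Rh.

Lemma Tobj_term_ge0 (i : 'I_D) : 0 <= Tobj_term Sigma W i.
Proof.
by rewrite mulr_ge0 ?mxtrace_gram_ge0 // (mxtrace_conj_sqrt _ Sh_sym) ?mxtrace_gramT_ge0.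
Qed.

Lemma nuclear_sqr_le_Aprod_Bprod k (hk : (k.+1 <= D)%N) :
  (\sum_j s 0 j) ^+ 2 <= \tr ((Aprod W hk)^T *m Aprod W hk)
                          * \tr (Bprod W k.+1 *m Sigma *m (Bprod W k.+1)^T).
Proof.
rewrite (mxtrace_conj_sqrt _ Sh_sym Sh_sqr); apply: (nuclear_sqr_le L_iso Rh_coiso).
by rewrite mulmxA mulmx_Aprod_Bprod.
Qed.

Lemma prod_Tobj_term_ge :
  (d D)%:R * \tr Sigma * (\sum_j s 0 j) ^+ (2 * n) <= \prod_(i < D) Tobj_term Sigma W i.
Proof.
have B0 : Bprod W (@ord0 n) = 1%:M by [].
rewrite /Tobj_term prodr_pair_shift mxtrace_gram_Aprod_top B0 mul1mx trmx1 mulmx1.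
have trSigma_ge0 : 0 <= \tr Sigma by rewrite -Sh_sqr mxtrace_sqr_ge0.
rewrite ler_wpM2l ?mulr_ge0 ?ler0n // exprM -[n in _ ^+ n]card_ord -prodr_const.
by apply: ler_prod => i _; rewrite sqr_ge0 nuclear_sqr_le_Aprod_Bprod.
Qed.

Lemma min_value_le_Tobj :
  min_value D (\sum_j s 0 j) (d D)%:R (\tr Sigma) <= Tobj D Sigma W.
Proof.
have trSigma_ge0 : 0 <= \tr Sigma by rewrite -Sh_sqr mxtrace_sqr_ge0.
have Tobj_ge0 : 0 <= Tobj D Sigma W by rewrite TobjE sumr_ge0 // => i _; apply: Tobj_term_ge0.
have a_ge0 : 0 <= \sum_j s 0 j by apply: sumr_ge0.
rewrite min_valueE ?mulr_ge0 ?ler0n //; apply: mulr_powR_inv_le => //.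
  by rewrite !mulr_ge0 ?ler0n ?exprn_ge0.
apply: le_trans prod_Tobj_term_ge _; rewrite TobjE.
have := @leif_AGM _ _ predT _ (fun i _ => Tobj_term_ge0 i); rewrite card_ord.
by case.
Qed.

End LowerBound.

Section BalancedLayers.
Variables (R : realType) (d : nat -> nat) (r n : nat).
Local Notation D := n.+2.
Variables (W : forall k : nat, 'M[R]_(d k, d k.-1)) (U : forall i : nat, 'M[R]_(d i, r)).
Variables (s : 'rV[R]_r) (L : 'M[R]_(d D, r)) (Rh : 'M[R]_(r, d 0)).
Variables (Sigma Sh : 'M[R]_(d 0)) (cD c c1 : R).
Hypothesis s_ge0 : forall j, 0 <= s 0 j.
Hypothesis U_iso : forall i, (1 <= i)%N -> (i <= D.-1)%N -> (U i)^T *m U i = 1%:M.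
Hypothesis W_last : W D = cD *: (L *m diag_sqrt s *m (U D.-1)^T).
Hypothesis W_mid : forall k, (2 <= k)%N -> (k <= D.-1)%N -> W k = c *: (U k *m (U k.-1)^T).
Hypothesis W_first : W 1%N *m Sh = c1 *: (U 1%N *m diag_sqrt s *m Rh).
Hypotheses (L_iso : L^T *m L = 1%:M) (Rh_coiso : Rh *m Rh^T = 1%:M).
Hypotheses (Sh_sym : Sh^T = Sh) (Sh_sqr : Sh *m Sh = Sigma).

Lemma trmx_diag_sqrt : (diag_sqrt s)^T = diag_sqrt s.
Proof. exact: tr_diag_mx. Qed.

Lemma diag_sqrt_sqr : diag_sqrt s *m diag_sqrt s = diag_mx s.
Proof.
rewrite mulmx_diag; congr diag_mx; apply/rowP => j.
by rewrite !mxE -expr2 sqr_sqrtr.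
Qed.

Lemma mxtrace_gram_isometry_diag_sqrt p q (M : 'M[R]_(p, r)) (N : 'M[R]_(q, r)) :
  M^T *m M = 1%:M -> N^T *m N = 1%:M ->
  \tr ((M *m diag_sqrt s *m N^T)^T *m (M *m diag_sqrt s *m N^T)) = \sum_j s 0 j.
Proof.
move=> M_iso N_iso; rewrite !trmx_mul trmxK trmx_diag_sqrt !mulmxA -(mulmxA _ M^T) M_iso.
by rewrite mulmx1 mxtrace_mulC !mulmxA N_iso mul1mx diag_sqrt_sqr mxtrace_diag.
Qed.

Lemma trmx_U_Tprod k m : (1 <= k)%N -> (m + k <= D.-1)%N ->
  (U (m + k))^T *m Tprod W k m = c ^+ m *: (U k)^T.
Proof.
move=> k_ge1; elim: m => [|m IHm] mk_le /=; first by rewrite mulmx1 scale1r.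
change ((U (m + k).+1)^T *m (W (m + k).+1 *m Tprod W k m) = c ^+ m.+1 *: (U k)^T).
rewrite W_mid ?ltnS ?(leq_trans k_ge1) ?leq_addl // -scalemxAl -scalemxAr !mulmxA.
by rewrite U_iso // mul1mx /= IHm ?(ltnW mk_le) // scalerA exprS.
Qed.

Lemma mxtrace_gram_W_last_mul j k (X : 'M[R]_(d j, d k)) (a : R) :
  (1 <= k <= D.-1)%N -> j.+1 = D -> (U j)^T *m X = a *: (U k)^T ->
  \tr ((W j.+1 *m X)^T *m (W j.+1 *m X)) = (cD * a) ^+ 2 * \sum_i s 0 i.
Proof.
move=> /andP[k_ge1 k_le] [jE] UX; subst j.
have -> : W D *m X = (cD * a) *: (L *m diag_sqrt s *m (U k)^T).
  by rewrite W_last -scalemxAl -mulmxA UX -scalemxAr scalerA.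
by rewrite mxtrace_gramZ mxtrace_gram_isometry_diag_sqrt ?U_iso.
Qed.

Lemma mxtrace_gram_Tprod_top k m : (1 <= k)%N -> ((m + k).+1 = D)%N ->
  \tr ((Tprod W k m.+1)^T *m Tprod W k m.+1) = (cD * c ^+ m) ^+ 2 * \sum_j s 0 j.
Proof.
move=> k_ge1 mkE; have mk_le : (m + k <= D.-1)%N by rewrite -mkE.
apply: mxtrace_gram_W_last_mul mkE (trmx_U_Tprod k_ge1 mk_le).
by rewrite k_ge1 (leq_trans _ mk_le) ?leq_addl.
Qed.

Lemma Bprod_mul_sqrt j : (1 <= j <= D.-1)%N ->
  Bprod W j *m Sh = (c ^+ j.-1 * c1) *: (U j *m diag_sqrt s *m Rh).
Proof.
elim: j => [//|j IHj] /andP[_ j_le].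
case: j IHj j_le => [_ _|j IHj j_le]; first by rewrite /= mulmx1 W_first mul1r.
have j_le' : (j.+1 <= D.-1)%N := ltnW j_le.
rewrite /= -mulmxA IHj // W_mid // -scalemxAl -scalemxAr scalerA !mulmxA.
by rewrite -(mulmxA _ (U j.+1)^T) U_iso // mulmx1 mulrA -exprS.
Qed.

Lemma mxtrace_Bprod_conj j : (1 <= j <= D.-1)%N ->
  \tr (Bprod W j *m Sigma *m (Bprod W j)^T) = (c ^+ j.-1 * c1) ^+ 2 * \sum_i s 0 i.
Proof.
move=> /andP[j_ge1 j_le]; rewrite (mxtrace_conj_sqrt _ Sh_sym Sh_sqr).
rewrite Bprod_mul_sqrt ?j_ge1 // mxtrace_gramTZ mxtrace_mulC -[Rh]trmxK.
by rewrite mxtrace_gram_isometry_diag_sqrt ?U_iso ?trmxK.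
Qed.

Lemma Bprod_last_mul_sqrt :
  Bprod W D *m Sh = (cD * (c ^+ n * c1)) *: (L *m diag_mx s *m Rh).
Proof.
have -> : Bprod W D = W D *m Bprod W D.-1 by [].
rewrite -mulmxA Bprod_mul_sqrt ?leqnn // W_last -scalemxAl -scalemxAr scalerA.
rewrite -!mulmxA (mulmxA (U n.+1)^T) U_iso // mul1mx.
by rewrite (mulmxA (diag_sqrt s)) diag_sqrt_sqr mulmxA.
Qed.

Lemma Tobj_balanced (v : R) :
  (cD * c ^+ n) ^+ 2 * (\sum_i s 0 i) * \tr Sigma = v ->
  (d D)%:R * ((c ^+ n * c1) ^+ 2 * \sum_i s 0 i) = v ->
  (forall q j, n = (q + j.+1)%N ->
     (cD * c ^+ q) ^+ 2 * (\sum_i s 0 i) * ((c ^+ j * c1) ^+ 2 * \sum_i s 0 i) = v) ->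
  Tobj D Sigma W = v *+ D.
Proof.
move=> first_v last_v mid_v; rewrite TobjE (eq_bigr (fun=> v)) ?sumr_const ?card_ord //.
move=> [[|i] i_lt] _; rewrite /Tobj_term.
  rewrite (AprodE _ _ (addn1 n.+1)) mxtrace_gram_castmx mxtrace_gram_Tprod_top ?addn1 //.
  by rewrite /= mul1mx trmx1 mulmx1.
have [i_lt_n|i_ge_n] := ltnP i n.
  have qiE : ((n - i.+1).+1 + i.+2)%N = D by rewrite /=; lia.
  rewrite (AprodE _ _ qiE) mxtrace_gram_castmx mxtrace_gram_Tprod_top //.
  by rewrite mxtrace_Bprod_conj //= ?mid_v //; lia.
have iE : i = n by lia.
subst i.
by rewrite mxtrace_gram_Aprod_top mxtrace_Bprod_conj ?leqnn.
Qed.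

End BalancedLayers.

Section LayerScales.
Variables (R : realType) (D : nat) (a y t : R).

Definition last_layer_scale : R :=
  powR a (- (D%:R - 2) / (2 * D%:R)) * powR y ((D%:R - 1) / (2 * D%:R))
  * powR t (- 1 / (2 * D%:R)).

Definition mid_layer_scale : R :=
  powR a D%:R^-1 * powR (y * t) (- 1 / (2 * D%:R)).

Definition first_layer_scale : R :=
  powR a (- (D%:R - 2) / (2 * D%:R)) * powR y (- 1 / (2 * D%:R))
  * powR t ((D%:R - 1) / (2 * D%:R)).

End LayerScales.

(* Taking logarithms turns every claimed identity into a linear identity
   between exponents, which [field] checks. *)
Lemma layer_scales_balanced (R : realType) n (a y t : R) :
  0 < a -> 0 < y -> 0 < t ->
  let D := n.+2 in
  let cD := last_layer_scale D a y t in
  let c := mid_layer_scale D a y t in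
  let c1 := first_layer_scale D a y t in
  let w := powR a (2 * (D%:R - 1) / D%:R) * powR (y * t) D%:R^-1 in
  [/\ (cD * c ^+ n) ^+ 2 * a * t = w,
      y * ((c ^+ n * c1) ^+ 2 * a) = w,
      (forall q j, n = (q + j.+1)%N ->
         (cD * c ^+ q) ^+ 2 * a * ((c ^+ j * c1) ^+ 2 * a) = w)
    & cD * (c ^+ n * c1) = 1].
Proof.
move=> a_gt0 y_gt0 t_gt0 D cD c c1 w.
rewrite /w /cD /c /c1 /last_layer_scale /mid_layer_scale /first_layer_scale.
rewrite -[a]lnK ?posrE // -[y]lnK ?posrE // -[t]lnK ?posrE //.
move: (ln a) (ln y) (ln t) => la ly lt {a_gt0 y_gt0 t_gt0}.
have D_neq0 : (D%:R : R) != 0 by rewrite pnatr_eq0.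
have DE : (D%:R : R) = n%:R + 2 by rewrite /D -addn2 natrD.
rewrite -!expRD -!expRM; do 3 rewrite -?expRD -?expRM_natr.
rewrite DE in D_neq0 *; split.
- by apply: congr1; field.
- by apply: congr1; field.
- move=> q j nE; do 3 rewrite -?expRD -?expRM_natr.
  by rewrite nE natrD -[j.+1]addn1 natrD in D_neq0 *; apply: congr1; field.
- by rewrite -[RHS]expR0; apply: congr1; field.
Qed.

Lemma pid_mx_isometry (R : realType) m r : (r <= m)%N ->
  (pid_mx r : 'M[R]_(m, r))^T *m pid_mx r = 1%:M.
Proof. by move=> r_le; rewrite tr_pid_mx mul_pid_mx minnn (minn_idPr r_le) pid_mx_1. Qed.

Lemma exists_layers (R : realType) (d : nat -> nat) (r n : nat)
    (U : forall i : nat, 'M[R]_(d i, r)) (L : 'M[R]_(d n.+2, r)) (s : 'rV[R]_r)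
    (Rh : 'M[R]_(r, d 0)) (Sh : 'M[R]_(d 0)) (cD c c1 : R) :
  Sh \in unitmx ->
  exists W : forall k : nat, 'M[R]_(d k, d k.-1),
    [/\ W n.+2 = cD *: (L *m diag_sqrt s *m (U n.+1)^T),
        forall k, (2 <= k)%N -> (k <= n.+1)%N -> W k = c *: (U k *m (U k.-1)^T)
      & W 1%N *m Sh = c1 *: (U 1%N *m diag_sqrt s *m Rh)].
Proof.
move=> Sh_unit.
exists (fun k => if k == n.+2 then cD *: (conform_mx 0 L *m diag_sqrt s *m (U k.-1)^T)
  else if k == 1%N then conform_mx 0 (c1 *: (U 1%N *m diag_sqrt s *m Rh *m invmx Sh))
  else c *: (U k *m (U k.-1)^T)).
split=> [|k k_ge2 k_le|]; rewrite ?eqxx ?conform_mx_id //=.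
  case: eqP => [kE|_]; first by rewrite kE ltnn in k_le.
  by case: eqP => // kE; rewrite kE in k_ge2.
by rewrite -scalemxAl mulmxKV.
Qed.

Lemma balanced_layers_minimize (R : realType) (d : nat -> nat) (r n : nat)
    (V : 'M[R]_(d n.+2, d 0)) (Sigma Sh : 'M[R]_(d 0)) (L : 'M[R]_(d n.+2, r))
    (s : 'rV[R]_r) (Rh : 'M[R]_(r, d 0)) :
  posdef Sigma -> Sh^T = Sh -> Sh *m Sh = Sigma -> Sh \in unitmx ->
  L^T *m L = 1%:M -> Rh *m Rh^T = 1%:M -> (forall j, 0 < s 0 j) ->
  V *m Sh = L *m diag_mx s *m Rh -> (r <= d 0)%N -> (r <= d n.+2)%N ->
  let a := \sum_j s 0 j in let y := (d n.+2)%:R in let t := \tr Sigma in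
  forall U : forall i : nat, 'M[R]_(d i, r),
  (forall i, (1 <= i)%N -> (i <= n.+1)%N -> (U i)^T *m U i = 1%:M) ->
  forall W : forall k : nat, 'M[R]_(d k, d k.-1),
  W n.+2 = last_layer_scale n.+2 a y t *: (L *m diag_sqrt s *m (U n.+1)^T) ->
  (forall k, (2 <= k)%N -> (k <= n.+1)%N ->
     W k = mid_layer_scale n.+2 a y t *: (U k *m (U k.-1)^T)) ->
  W 1%N *m Sh = first_layer_scale n.+2 a y t *: (U 1%N *m diag_sqrt s *m Rh) ->
  Bprod W n.+2 = V /\ Tobj n.+2 Sigma W = min_value n.+2 a y t.
Proof.
move=> Sigma_pd Sh_sym Sh_sqr Sh_unit L_iso Rh_coiso s_gt0 V_svd r_le0 r_leD a y t.
move=> U U_iso W W_last W_mid W_first; have s_ge0 j : 0 <= s 0 j := ltW (s_gt0 j).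
have W_svd := Bprod_last_mul_sqrt s_ge0 U_iso W_last W_mid W_first.
have Tobj_eq := Tobj_balanced s_ge0 U_iso W_last W_mid W_first L_iso Rh_coiso Sh_sym Sh_sqr.
set w := powR a (2 * (n.+2%:R - 1) / n.+2%:R) * powR (y * t) n.+2%:R^-1.
suff [W_V Tobj_w] : Bprod W n.+2 *m Sh = V *m Sh /\ Tobj n.+2 Sigma W = w *+ n.+2.
  by split; [exact: (can_inj (mulmxK Sh_unit)) | rewrite Tobj_w /min_value -mulrA mulr_natl].
(* For r = 0 the layer scales are junk values of powR at 0, but every term vanishes. *)
have [r0|r_gt0] := posnP r.
  have a0 : \sum_j s 0 j = 0 by apply: big1 => -[j j_lt]; exfalso; by rewrite r0 in j_lt.
  have L0 : L = 0 by apply/matrixP => i [j j_lt]; exfalso; by rewrite r0 in j_lt.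
  have w0 : w = 0.
    rewrite /w /a a0 powR0 ?mul0r // !mulf_neq0 ?invr_eq0 ?pnatr_eq0 //.
    by rewrite subr_eq0 pnatr_eq1.
  split; first by rewrite W_svd V_svd L0 !mul0mx scaler0.
  by rewrite w0; apply: Tobj_eq => [||q j _]; rewrite a0 !(mul0r, mulr0).
have a_gt0 : 0 < a by rewrite /a (bigD1 (Ordinal r_gt0)) // ltr_pwDl ?sumr_ge0.
have y_gt0 : 0 < y by rewrite ltr0n (leq_trans r_gt0).
have t_gt0 : 0 < t by rewrite posdef_mxtrace_gt0 // (leq_trans r_gt0).
have [first_w last_w mid_w scales1] := layer_scales_balanced n a_gt0 y_gt0 t_gt0.
split; first by rewrite W_svd scales1 scale1r V_svd.
exact: Tobj_eq first_w last_w mid_w.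
Qed.

Theorem lemma4 (R : realType) (D : nat) (d : nat -> nat) (r : nat)
  (V : 'M[R]_(d D, d 0)) (Sigma Sh : 'M[R]_(d 0))
  (L : 'M[R]_(d D, r)) (s : 'rV[R]_r) (Rh : 'M[R]_(r, d 0)) :
  (1 <= D)%N ->
  posdef Sigma ->
  (* Sh = Sigma^(1/2), the positive definite square root of Sigma *)
  posdef Sh -> Sh *m Sh = Sigma ->
  (* compact SVD  V Sigma^(1/2) = L diag(s) Rh *)
  L^T *m L = 1%:M -> Rh *m Rh^T = 1%:M -> (forall j, 0 < s 0 j) ->
  V *m Sh = L *m diag_mx s *m Rh ->
  \rank (V *m Sh) = r ->
  (forall k, (k <= D)%N -> (r <= d k)%N) ->
  let trS := \sum_(j < r) s 0 j in
  let dy := (d D)%:R : R in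
  let trSig := \tr Sigma in
  let val := D%:R * powR trS (2 * (D%:R - 1) / D%:R)
                  * powR (dy * trSig) (D%:R^-1) in
  (* val is a lower bound of T on the constraint set *)
  (forall W : forall k : nat, 'M[R]_(d k, d k.-1),
      Bprod W D = V -> val <= Tobj D Sigma W) /\
  (* val is attained *)
  (exists W : forall k : nat, 'M[R]_(d k, d k.-1),
      Bprod W D = V /\ Tobj D Sigma W = val) /\
  (* the explicit minimizers (meaningful for D >= 2) *)
  ((2 <= D)%N ->
   forall (U : forall i : nat, 'M[R]_(d i, r)),
   (forall i, (1 <= i)%N -> (i <= D.-1)%N -> (U i)^T *m U i = 1%:M) ->
   forall W : forall k : nat, 'M[R]_(d k, d k.-1),
   W D = (powR trS (- (D%:R - 2) / (2 * D%:R)) * powR dy ((D%:R - 1) / (2 * D%:R))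
           * powR trSig (- 1 / (2 * D%:R))) *: (L *m diag_sqrt s *m (U D.-1)^T) ->
   (forall k, (2 <= k)%N -> (k <= D.-1)%N ->
      W k = (powR trS (D%:R^-1) * powR (dy * trSig) (- 1 / (2 * D%:R)))
              *: (U k *m (U k.-1)^T)) ->
   W 1%N *m Sh = (powR trS (- (D%:R - 2) / (2 * D%:R)) * powR dy (- 1 / (2 * D%:R))
           * powR trSig ((D%:R - 1) / (2 * D%:R))) *: (U 1%N *m diag_sqrt s *m Rh) ->
   Bprod W D = V /\ Tobj D Sigma W = val).
Proof.
move=> D_ge1 Sigma_pd Sh_pd Sh_sqr L_iso Rh_coiso s_gt0 V_svd _ r_le trS dy trSig val.
have Sh_sym : Sh^T = Sh by case: Sh_pd.
have s_ge0 j : 0 <= s 0 j := ltW (s_gt0 j).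
destruct D as [|n]; first by [].
split=> [W W_V|].
  by apply: min_value_le_Tobj Sh_sym Sh_sqr L_iso Rh_coiso s_ge0 _; rewrite W_V.
destruct n as [|n].
  split=> //; exists (fun=> conform_mx 0 V); split; first by rewrite /= mulmx1 conform_mx_id.
  have yt_ge0 : 0 <= dy * trSig by rewrite /trSig -Sh_sqr mulr_ge0 ?ler0n ?mxtrace_sqr_ge0.
  by rewrite Tobj_single_layer -(min_value_single_layer trS yt_ge0).
have Sh_unit := posdef_unitmx Sh_pd.
have minimize := balanced_layers_minimize Sigma_pd Sh_sym Sh_sqr Sh_unit L_iso Rh_coiso
  s_gt0 V_svd (r_le 0%N isT) (r_le _ (leqnn _)).
split=> [|_]; last exact: minimize.
have [W [W_last W_mid W_first]] := exists_layers (fun i => pid_mx r) L s Rh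
  (last_layer_scale n.+2 trS dy trSig) (mid_layer_scale n.+2 trS dy trSig)
  (first_layer_scale n.+2 trS dy trSig) Sh_unit.
exists W; apply: minimize W_last W_mid W_first => i _ i_le.
exact/pid_mx_isometry/r_le/(leq_trans i_le).
Qed.
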